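(* Let $S$ be a set of bilabelled graphs, let $\mathscr{C}$ be the skew graph category generated by $S$ (the smallest skew graph category containing $S$), and let $F=\{(K,g_{\mathbf{a}}^{-1}g_{\mathbf{b}})\mid (K,\mathbf{a},\mathbf{b})\in\mathscr{C}\}$ be the corresponding graph fibration. Then every graph in the closure of $\{N_0,N_1\}\cup\{H\mid (H,\mathbf{a},\mathbf{b})\in S\}$ under arbitrary $f$-unions satisfies $F(K)\ne\emptyset$, and for every graph $K$ with $F(K)\neq\emptyset$, $$F(K)=\langle\!\langle \iota(g_{\mathbf{a}^*\mathbf{b}})\mid (H,\mathbf{a},\mathbf{b})\in S,\ \iota\colon H\to K\text{ an injective graph homomorphism}\rangle\!\rangle\trianglelefteq\mathbb{Z}_2^{*V(K)},$$ where $\langle\!\langle\cdot\rangle\!\rangle$ denotes the normal subgroup generated.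
   Context: Graphs are finite, undirected, without multiple edges, loops allowed, considered up to isomorphism; $N_k$ is the edgeless graph on $k$ vertices. For a set $V$, $\mathbb{Z}_2^{*V}$ is the group generated by $V$ subject to $v^2=e$; for a tuple $\mathbf{a}=(a_1,\dots,a_k)$ over $V$, $g_{\mathbf{a}}=a_1\cdots a_k$, and $\mathbf{a}^*$ is the reversed tuple, $\mathbf{a}^*\mathbf{b}$ the concatenation (so $g_{\mathbf{a}^*\mathbf{b}}=g_{\mathbf{a}}^{-1}g_{\mathbf{b}}$). A map $\phi\colon V\to V'$ induces maps on tuples and a homomorphism $\mathbb{Z}_2^{*V}\to\mathbb{Z}_2^{*V'}$, also denoted $\phi$. A vertex overlap of graphs $K,H$ is a subset $f\subset V(K)\times V(H)$ in which each vertex occurs at most once; $K\cup_fH$ is the quotient of $K\sqcup H$ identifying $v$ with $w$ for $(v,w)\in f$ (an edge between two vertices of the quotient iff there is one between some representatives); $f_K,f_H$ are the induced maps. The closure of a set of graphs under $f$-unions is the smallest set containing it and containing $K\cup_fH$ whenever it contains $K,H$. For a set $F$ of pairs $(K,a)$ with $a\in\mathbb{Z}_2^{*V(K)}$ (up to graph isomorphism), $F(K):=\{a\mid (K,a)\in F\}$. Bilabelled graph: $(K,\mathbf{a},\mathbf{b})$ with $K$ a graph, $\mathbf{a}\in V(K)^k$, $\mathbf{b}\in V(K)^l$, up to isomorphism of $K$ preserving the tuples. Operations: $f$-union $(K,\mathbf{a},\mathbf{b})\cup_f(H,\mathbf{c},\mathbf{d})=(K\cup_fH,f_K(\mathbf{a})f_H(\mathbf{c}),f_K(\mathbf{b})f_H(\mathbf{d}))$;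 composition (for $|\mathbf{b}|=|\mathbf{c}|$) $(H,\mathbf{c},\mathbf{d})\cdot(K,\mathbf{a},\mathbf{b})=(H\cdot K,\mathbf{a},\mathbf{d})$ with $H\cdot K$ the quotient of $K\sqcup H$ identifying $b_i$ with $c_i$ for all $i$; involution $(K,\mathbf{a},\mathbf{b})^*=(K,\mathbf{b},\mathbf{a})$. Let $\mathbf{0}=(N_0,\emptyset,\emptyset)$ and $\mathbf{M}^{k,l}=(M,(v,\dots,v),(v,\dots,v))$ for the one-vertex loopless graph $M$ with $k$ inputs, $l$ outputs. $\ker\mathbf{b}$ is the partition of positions of $\mathbf{b}$ by equal entries. A skew graph category is a set of bilabelled graphs containing $\mathbf{0},\mathbf{M}^{1,1},\mathbf{M}^{0,2}$ and closed under all $f$-unions, under compositions $\mathbf{H}\cdot\mathbf{K}$ of $\mathbf{K}=(K,\mathbf{a},\mathbf{b})$, $\mathbf{H}=(H,\mathbf{c},\mathbf{d})$ with $\ker\mathbf{b}=\ker\mathbf{c}$, and involution. (For a skew graph category, $F$ as defined is a graph fibration.) *)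

From mathcomp Require Import all_boot.
Set Implicit Arguments. Unset Strict Implicit. Unset Printing Implicit Defensive.

(* ---------- Graphs ----------
   A graph has vertex set {0, ..., nv-1}; [adj] is only meaningful on that
   range.  Loops allowed, no multiple edges.  Everything is considered up to
   isomorphism, so all constructions below are specified relationally. *)
Record graph := Graph { nv : nat; adj : nat -> nat -> bool }.

Definition wf_graph (G : graph) : Prop :=
  forall x y, x < nv G -> y < nv G -> adj G x y = adj G y x.

Definition giso (G H : graph) (phi : nat -> nat) : Prop :=
  [/\ nv G = nv H,
      (forall x, x < nv G -> phi x < nv H),
      (forall x y, x < nv G -> y < nv G -> phi x = phi y -> x = y) &
      (forall x y, x < nv G -> y < nv G -> adj G x y = adj H (phi x) (phi y))].

Definition inj_ghom (H K : graph) (iota : nat -> nat) : Prop :=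
  [/\ (forall x, x < nv H -> iota x < nv K),
      (forall x y, x < nv H -> y < nv H -> iota x = iota y -> x = y) &
      (forall x y, x < nv H -> y < nv H -> adj H x y -> adj K (iota x) (iota y))].

Definition dunion (K H : graph) : graph :=
  Graph (nv K + nv H) (fun x y =>
    if x < nv K then (if y < nv K then adj K x y else false)
    else if y < nv K then false else adj H (x - nv K) (y - nv K)).

Definition shift (K : graph) (s : seq nat) : seq nat := [seq nv K + x | x <- s].

(* Q (with quotient map q) is the quotient of G by the equivalence relation
   generated by the pairs E: q is onto, identifies the pairs, its kernel is
   contained in every kernel of a map identifying the pairs (i.e. it is the
   smallest such equivalence), and there is an edge between two quotient
   vertices iff there is one between some representatives. *)
Definition is_quot (G : graph) (E : seq (nat * nat)) (Q : graph) (q : nat -> nat)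
  : Prop :=
  [/\ (forall x, x < nv G -> q x < nv Q),
      (forall y, y < nv Q -> exists2 x, x < nv G & q x = y),
      (forall p, p \in E -> q p.1 = q p.2),
      (forall r : nat -> nat, (forall p, p \in E -> r p.1 = r p.2) ->
         forall x y, x < nv G -> y < nv G -> q x = q y -> r x = r y) &
      (forall x' y', x' < nv Q -> y' < nv Q ->
         (adj Q x' y' <->
          exists x y, [/\ x < nv G, y < nv G, q x = x', q y = y' & adj G x y]))].

Definition vertex_overlap (K H : graph) (f : seq (nat * nat)) : Prop :=
  [/\ uniq (unzip1 f), uniq (unzip2 f) &
      all (fun p => (p.1 < nv K) && (p.2 < nv H)) f].

(* the identifications of K \cup_f H, inside dunion K H *)
Definition overlap_pairs (K : graph) (f : seq (nat * nat)) : seq (nat * nat) :=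
  [seq (p.1, nv K + p.2) | p <- f].

Record bgraph := BG { bgr : graph; bin : seq nat; bout : seq nat }.

Definition wf_bgraph (X : bgraph) : Prop :=
  wf_graph (bgr X) /\ all (fun v => v < nv (bgr X)) (bin X ++ bout X).

Definition bg_iso (X Y : bgraph) : Prop :=
  exists phi, [/\ giso (bgr X) (bgr Y) phi,
                  map phi (bin X) = bin Y & map phi (bout X) = bout Y].

Definition same_ker (b c : seq nat) : Prop :=
  size b = size c /\
  forall i j, i < size b -> j < size b ->
    (nth 0 b i == nth 0 b j) = (nth 0 c i == nth 0 c j).

Definition M_graph : graph := Graph 1 (fun _ _ => false).
Definition bzero : bgraph := BG (Graph 0 (fun _ _ => false)) [::] [::].
Definition bM11 : bgraph := BG M_graph [:: 0] [:: 0].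
Definition bM02 : bgraph := BG M_graph [::] [:: 0; 0].

Inductive skew_gen (S : bgraph -> Prop) : bgraph -> Prop :=
| sg_base X : S X -> skew_gen S X
| sg_iso X Y : skew_gen S X -> bg_iso X Y -> skew_gen S Y
| sg_zero : skew_gen S bzero
| sg_M11 : skew_gen S bM11
| sg_M02 : skew_gen S bM02
| sg_union X Y f Q q :
    skew_gen S X -> skew_gen S Y ->
    vertex_overlap (bgr X) (bgr Y) f ->
    is_quot (dunion (bgr X) (bgr Y)) (overlap_pairs (bgr X) f) Q q ->
    skew_gen S (BG Q (map q (bin X ++ shift (bgr X) (bin Y)))
                     (map q (bout X ++ shift (bgr X) (bout Y))))
(* composition (H,c,d).(K,a,b) = (H.K, a, d), X = (K,a,b), Y = (H,c,d) *)
| sg_comp X Y Q q :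
    skew_gen S X -> skew_gen S Y ->
    same_ker (bout X) (bin Y) ->
    is_quot (dunion (bgr X) (bgr Y)) (zip (bout X) (shift (bgr X) (bin Y))) Q q ->
    skew_gen S (BG Q (map q (bin X)) (map q (shift (bgr X) (bout Y))))
| sg_inv X : skew_gen S X -> skew_gen S (BG (bgr X) (bout X) (bin X)).

Inductive fu_closure (S : bgraph -> Prop) : graph -> Prop :=
| fc_N0 G : nv G = 0 -> fu_closure S G
| fc_N1 G : nv G = 1 -> adj G 0 0 = false -> fu_closure S G
| fc_S X : S X -> fu_closure S (bgr X)
| fc_iso G H phi : fu_closure S G -> giso G H phi -> fu_closure S H
| fc_union K H f Q q :
    fu_closure S K -> fu_closure S H -> vertex_overlap K H f ->
    is_quot (dunion K H) (overlap_pairs K f) Q q -> fu_closure S Q.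

(* ---------- The free product Z_2^{*V}, V = {0,...,n-1} ----------
   Elements are reduced words (no two equal adjacent letters). *)
Definition push (x : nat) (s : seq nat) : seq nat :=
  if s is y :: s' then (if x == y then s' else x :: s) else [:: x].
Definition reduce (w : seq nat) : seq nat := foldr push [::] w.

Inductive nclosure (n : nat) (Gs : seq nat -> Prop) : seq nat -> Prop :=
| nc_gen g : Gs g -> nclosure n Gs (reduce g)
| nc_one : nclosure n Gs [::]
| nc_mul x y : nclosure n Gs x -> nclosure n Gs y -> nclosure n Gs (reduce (x ++ y))
| nc_inv x : nclosure n Gs x -> nclosure n Gs (rev x)
| nc_conj x u : nclosure n Gs x -> all (fun v => v < n) u ->
    nclosure n Gs (reduce (rev u ++ x ++ u)).

(* F(K): the fibration of the category generated by S; g_a^{-1} g_b = g_{a* b}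
   transported along an isomorphism onto K *)
Definition fibration (S : bgraph -> Prop) (K : graph) (w : seq nat) : Prop :=
  exists X phi, [/\ skew_gen S X, giso (bgr X) K phi &
                    w = reduce (map phi (rev (bin X) ++ bout X))].

Definition fib_gens (S : bgraph -> Prop) (K : graph) (w : seq nat) : Prop :=
  exists X iota, [/\ S X, inj_ghom (bgr X) K iota &
                     w = map iota (rev (bin X) ++ bout X)].

From mathcomp Require Import all_boot zify.
Set Implicit Arguments. Unset Strict Implicit. Unset Printing Implicit Defensive.

(* An element of F(K) is, up to an isomorphism, the word g_{a* b} of some
   (K,a,b) of the category, and the generating operations act on these words
   as group operations: the base elements give the empty word, an f-union
   gives the word of the first factor conjugated by the image of the second
   input tuple times the word of the second factor, a composition gives the
   product of the two words (the identified middle tuples cancel), and the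
   involution gives the inverse.  As both factors embed injectively into the
   result, every such word lies in the normal closure of the generators.
   Conversely, given one (K,a,b), an f-union along an injective homomorphism
   i : H -> K has K itself as result and appends i(c), i(d) to the tuples of
   (K,a,b); gluing M^{1,1} this way conjugates by a vertex, gluing a second
   (K,c,d) multiplies the words up to conjugation, and gluing a member of S
   yields a generator, so F(K) is a normal subgroup containing the
   generators. *)

Definition reduced (s : seq nat) : bool := sorted (fun x y : nat => x != y) s.

(* Words act on reduced words by left multiplication; [reduce w] is
   convertible to [act w [::]]. *)
Definition act (w s : seq nat) : seq nat := foldr push s w.

Lemma reduced_push x s : reduced s -> reduced (push x s).
Proof.
case: s => [|y s] //= hs; case: eqP => [_|/eqP ne]; last by rewrite /reduced /= ne.
exact: path_sorted hs.
Qed.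

Lemma reduced_act w s : reduced s -> reduced (act w s).
Proof. by elim: w => //= x w IH hs; apply/reduced_push/IH. Qed.

Lemma reduced_reduce w : reduced (reduce w).
Proof. exact: reduced_act. Qed.

Lemma reduced_rev s : reduced s -> reduced (rev s).
Proof. by rewrite /reduced rev_sorted; apply: sub_sorted => x y; rewrite eq_sym. Qed.

Lemma pushK x s : reduced s -> push x (push x s) = s.
Proof.
case: s => [|y s] /=; first by rewrite eqxx.
case: eqP => [->|/eqP ne] hs /=; last by rewrite eqxx.
by case: s hs => [|z s] //= /andP [/negbTE ->].
Qed.

Lemma reduce_cat x y : reduce (x ++ y) = act x (reduce y).
Proof. exact: foldr_cat. Qed.

Lemma act_map_reduce h w s : reduced s -> act (map h (reduce w)) s = act (map h w) s.
Proof.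
move=> hs; elim: w => //= x w; rewrite -/(reduce w).
case: (reduce w) => [|y r] /=; first by move=> <-.
case: eqP => [<-|_] /= <- //.
by rewrite pushK // reduced_act.
Qed.

Lemma act_reduce w s : reduced s -> act (reduce w) s = act w s.
Proof. by move=> hs; have := act_map_reduce id w hs; rewrite !map_id. Qed.

Lemma act_revK w s : reduced s -> act (rev w) (act w s) = s.
Proof.
elim: w s => //= x w IH s hs.
by rewrite rev_cons -cats1 /act foldr_cat /= pushK ?reduced_act //; apply: IH.
Qed.

Lemma act_Krev w s : reduced s -> act w (act (rev w) s) = s.
Proof. by move=> hs; rewrite -{1}(revK w) act_revK. Qed.

Lemma reduce_id s : reduced s -> reduce s = s.
Proof.
elim: s => //= x s IH hxs; rewrite -/(reduce s) IH; last exact: path_sorted hxs.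
by case: s hxs {IH} => //= y s /andP [/negbTE ->].
Qed.

Lemma reduce_idem w : reduce (reduce w) = reduce w.
Proof. exact/reduce_id/reduced_reduce. Qed.

Lemma reduce_map_reduce h w : reduce (map h (reduce w)) = reduce (map h w).
Proof. exact: act_map_reduce. Qed.

Lemma reduce_cat_reduce x y z : reduce (x ++ reduce y ++ z) = reduce (x ++ y ++ z).
Proof. by rewrite !reduce_cat act_reduce // reduced_reduce. Qed.

Lemma reduce_cat_reducer x y : reduce (x ++ reduce y) = reduce (x ++ y).
Proof. by rewrite !reduce_cat reduce_idem. Qed.

Lemma reduce_reduce_cat x y : reduce (reduce x ++ reduce y) = reduce (x ++ y).
Proof. by rewrite !reduce_cat reduce_idem act_reduce // reduced_reduce. Qed.

Lemma reduce_cat_revK x y z : reduce (x ++ rev y ++ y ++ z) = reduce (x ++ z).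
Proof. by rewrite !reduce_cat act_revK // reduced_reduce. Qed.

Lemma reduce_cat_Krev x y z : reduce (x ++ y ++ rev y ++ z) = reduce (x ++ z).
Proof. by rewrite !reduce_cat act_Krev // reduced_reduce. Qed.

Lemma reduce_revK y z : reduce (rev y ++ y ++ z) = reduce z.
Proof. exact: (reduce_cat_revK [::]). Qed.

Lemma reduce_rev w : reduce (rev w) = rev (reduce w).
Proof.
have act_rev_reduce : act (rev w) [::] = act (rev (reduce w)) [::].
  by rewrite -{1}(act_Krev (reduce w) (s := [::])) // act_reduce ?act_revK ?reduced_act.
change (act (rev w) [::] = rev (reduce w)); rewrite act_rev_reduce.
exact/reduce_id/reduced_rev/reduced_reduce.
Qed.

Lemma reduce_conj_mul u x y :
  reduce (reduce (rev u ++ reduce x ++ u) ++ reduce (rev u ++ y)) =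
  reduce (rev u ++ x ++ y).
Proof.
by rewrite reduce_reduce_cat -!catA reduce_cat_reduce (catA (rev u)) reduce_cat_Krev catA.
Qed.

Lemma reduce_mul_cancel x u y :
  reduce (reduce (x ++ u) ++ reduce (rev u ++ y)) = reduce (x ++ y).
Proof. by rewrite reduce_reduce_cat -catA reduce_cat_Krev. Qed.

Lemma all_map_lt n m f s : (forall x, x < n -> f x < m) ->
  all (fun v => v < n) s -> all (fun v => v < m) (map f s).
Proof. by move=> hf /allP hs; apply/allP => _ /mapP [v /hs/hf hv ->]. Qed.

Lemma map_shift (f : nat -> nat) A s : map f (shift A s) = map (fun x => f (nv A + x)) s.
Proof. by rewrite -map_comp. Qed.

Lemma shift_lt A B s : all (fun v => v < nv B) s ->
  all (fun v => v < nv A + nv B) (shift A s).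
Proof. by apply: all_map_lt => x hx; rewrite ltn_add2l. Qed.

Lemma dunion_lt A B s : all (fun v => v < nv A) s ->
  all (fun v => v < nv A + nv B) s.
Proof. by apply: sub_all => x hx; rewrite ltn_addr. Qed.

Lemma giso_id G : giso G G id.
Proof. by []. Qed.

Lemma giso_inj_ghom G H phi : giso G H phi -> inj_ghom G H phi.
Proof. by case=> _ h1 h2 h3; split=> // x y hx hy; rewrite -h3. Qed.

Lemma inj_ghom_comp A B C f g :
  inj_ghom A B f -> inj_ghom B C g -> inj_ghom A C (g \o f).
Proof.
case=> f1 f2 f3 [g1 g2 g3]; split=> [x hx|x y hx hy /= e|x y hx hy e] /=.
- exact/g1/f1.
- by apply: f2 => //; apply: g2 => //; apply: f1.
- by apply: g3; [apply: f1 | apply: f1 | apply: f3].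
Qed.

Section QuotientOfDisjointUnion.
Variables (A B Q : graph) (E : seq (nat * nat)) (q : nat -> nat).
Hypothesis hq : is_quot (dunion A B) E Q q.

Lemma quot_lt x : x < nv A + nv B -> q x < nv Q.
Proof. by case: hq => h1 *; apply: h1. Qed.

(* A retraction [r] onto one summand that is constant on the pairs of [E]
   shows, by minimality of the kernel of [q], that [q] is injective there. *)
Lemma quot_inj_ghoml (r : nat -> nat) :
  (forall p, p \in E -> r p.1 = r p.2) -> (forall x, x < nv A -> r x = x) ->
  inj_ghom A Q q.
Proof.
case: hq => h1 _ _ h4 h5 hr hrx.
have ltA x : x < nv A -> x < nv A + nv B by move=> hx; rewrite ltn_addr.
split=> [x /ltA/h1 //|x y hx hy e|x y hx hy hxy].
  by rewrite -(hrx x hx) -(hrx y hy); apply: h4 => //; apply: ltA.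
apply/h5; [exact/h1/ltA | exact/h1/ltA |].
by exists x, y; split; rewrite ?ltA //= hx hy.
Qed.

Lemma quot_inj_ghomr (r : nat -> nat) :
  (forall p, p \in E -> r p.1 = r p.2) ->
  (forall x, x < nv B -> r (nv A + x) = nv A + x) ->
  inj_ghom B Q (fun x => q (nv A + x)).
Proof.
case: hq => h1 _ _ h4 h5 hr hrx.
have ltB x : x < nv B -> nv A + x < nv A + nv B by rewrite ltn_add2l.
split=> [x /ltB/h1 //|x y hx hy e|x y hx hy hxy].
  apply/eqP; rewrite -(eqn_add2l (nv A)) -(hrx x hx) -(hrx y hy).
  by apply/eqP/h4 => //; apply: ltB.
apply/h5; [exact/h1/ltB | exact/h1/ltB |].
exists (nv A + x), (nv A + y); split; rewrite ?ltB //=.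
by rewrite !ltnNge !leq_addr /= !addKn.
Qed.

End QuotientOfDisjointUnion.

Lemma nth_map_index (T : eqType) (f : seq T) (g h : T -> nat) p :
  uniq (map g f) -> p \in f -> nth 0 (map h f) (index (g p) (map g f)) = h p.
Proof.
move=> hu hp; have hi : index p f < size f by rewrite index_mem.
rewrite -{1}(nth_index p hp) -(nth_map p 0 g hi) index_uniq ?size_map //.
by rewrite (nth_map p) // nth_index.
Qed.

Lemma union_inj_ghom A B f Q q : vertex_overlap A B f ->
  is_quot (dunion A B) (overlap_pairs A f) Q q ->
  inj_ghom A Q q /\ inj_ghom B Q (fun x => q (nv A + x)).
Proof.
case=> u1 u2 /allP hf hq; split.
- apply: (quot_inj_ghoml hq (r := fun z => if z < nv A then z else
      if z - nv A \in unzip2 f then nth 0 (unzip1 f) (index (z - nv A) (unzip2 f))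
      else z)); last by move=> x ->.
  move=> _ /mapP [p hp ->] /=; have /andP [-> _] := hf _ hp.
  rewrite ltnNge leq_addr /= addKn map_f //.
  by rewrite nth_map_index.
- apply: (quot_inj_ghomr hq (r := fun z => if z < nv A then
      (if z \in unzip1 f then nv A + nth 0 (unzip2 f) (index z (unzip1 f)) else z)
      else z)); last by move=> x _; rewrite ltnNge leq_addr.
  move=> _ /mapP [p hp ->] /=; have /andP [-> _] := hf _ hp.
  by rewrite ltnNge leq_addr /= map_f // nth_map_index.
Qed.

Lemma zip_nthP (b c : seq nat) p : size b = size c ->
  reflect (exists2 i, i < size b & p = (nth 0 b i, nth 0 c i)) (p \in zip b c).
Proof.
move=> hs; have size_bc : size (zip b c) = size b by rewrite size_zip hs minnn.
apply: (iffP idP) => [hp|[i hi ->]].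
  exists (index p (zip b c)); first by rewrite -size_bc index_mem.
  by rewrite -nth_zip // nth_index.
by rewrite -nth_zip //; apply: mem_nth; rewrite size_bc.
Qed.

Lemma comp_inj_ghom A B b c Q q : same_ker b c ->
  all (fun v => v < nv A) b -> all (fun v => v < nv B) c ->
  is_quot (dunion A B) (zip b (shift A c)) Q q ->
  [/\ inj_ghom A Q q, inj_ghom B Q (fun x => q (nv A + x))
    & map q b = map q (shift A c)].
Proof.
case=> hs hk /allP hb /allP hc hq.
have hs' : size b = size (shift A c) by rewrite size_map.
have nth_shift i : i < size b -> nth 0 (shift A c) i = nv A + nth 0 c i.
  by move=> hi; rewrite (nth_map 0) -?hs.
have nth_ker i j : i < size b -> j < size b ->
    (nth 0 b i = nth 0 b j) <-> (nth 0 c i = nth 0 c j).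
  by move=> hi hj; split=> /eqP e; apply/eqP; rewrite ?hk // -?hk.
split.
- apply: (quot_inj_ghoml hq (r := fun z => if z < nv A then z else
      if z - nv A \in c then nth 0 b (index (z - nv A) c) else z)); last by move=> x ->.
  move=> _ /(zip_nthP _ hs') [i hi ->] /=.
  have hci : nth 0 c i \in c by rewrite mem_nth -?hs.
  rewrite nth_shift // hb ?mem_nth // ltnNge leq_addr /= addKn hci.
  by apply/nth_ker; rewrite ?nth_index // hs index_mem.
- apply: (quot_inj_ghomr hq (r := fun z => if z < nv A then
      (if z \in b then nv A + nth 0 c (index z b) else z) else z)); last first.
    by move=> x _; rewrite ltnNge leq_addr.
  move=> _ /(zip_nthP _ hs') [i hi ->] /=.
  have hbi : nth 0 b i \in b by rewrite mem_nth.
  rewrite nth_shift // hb // hbi ltnNge leq_addr /=; congr (_ + _).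
  by apply/nth_ker; rewrite ?nth_index // index_mem.
- apply: (eq_from_nth (x0 := 0)); rewrite !size_map // => i hi.
  rewrite (nth_map 0) // (nth_map 0) -?hs' //.
  by case: hq => _ _ hE _ _; apply: (hE (_, _)); apply/zip_nthP => //; exists i.
Qed.

Lemma nclosure_fib_gens_map S G Q h w : inj_ghom G Q h ->
  nclosure (nv G) (fib_gens S G) w ->
  nclosure (nv Q) (fib_gens S Q) (reduce (map h w)).
Proof.
move=> hh; elim=> {w} [_ [X [io [HX hio ->]]]| |x y _ IHx _ IHy|x _ IH|x u _ IH hu].
- rewrite reduce_map_reduce -map_comp; apply: nc_gen.
  by exists X, (h \o io); split=> //; apply: inj_ghom_comp hh.
- exact: nc_one.
- by rewrite reduce_map_reduce map_cat -reduce_reduce_cat; apply: nc_mul.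
- by rewrite map_rev reduce_rev; apply: nc_inv.
- rewrite reduce_map_reduce !map_cat map_rev -reduce_cat_reduce; apply: nc_conj => //.
  by case: hh => h1 _ _; apply: all_map_lt hu.
Qed.

Lemma nclosure_fib_gens_map_reduce S G Q h w : inj_ghom G Q h ->
  nclosure (nv G) (fib_gens S G) (reduce w) ->
  nclosure (nv Q) (fib_gens S Q) (reduce (map h w)).
Proof. by move=> hh /(nclosure_fib_gens_map hh); rewrite reduce_map_reduce. Qed.

Section SkewGenerated.
Variable S : bgraph -> Prop.
Hypothesis HS : forall X, S X -> wf_bgraph X.

Lemma skew_gen_labels X : skew_gen S X ->
  all (fun v => v < nv (bgr X)) (bin X ++ bout X).
Proof.
elim=> {X} //.
- by move=> X /HS [].
- move=> X Y _ IH [phi [[_ hphi _ _] <- <-]]; rewrite -map_cat.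
  exact: all_map_lt IH.
- move=> X Y f Q q _ IHX _ IHY _ hq /=; rewrite -map_cat.
  apply: all_map_lt (quot_lt hq) _.
  move: IHX IHY; rewrite !all_cat => /andP [h1 h2] /andP [h3 h4].
  rewrite (dunion_lt (bgr Y) h1) (dunion_lt (bgr Y) h2).
  by rewrite (shift_lt (bgr X) h3) (shift_lt (bgr X) h4).
- move=> X Y Q q _ IHX _ IHY _ hq /=; rewrite -map_cat.
  apply: all_map_lt (quot_lt hq) _.
  move: IHX IHY; rewrite !all_cat => /andP [h1 _] /andP [_ h4].
  by rewrite (dunion_lt (bgr Y) h1) (shift_lt (bgr X) h4).
- by move=> X _; rewrite /= !all_cat andbC.
Qed.

Lemma skew_gen_nclosure X : skew_gen S X ->
  nclosure (nv (bgr X)) (fib_gens S (bgr X)) (reduce (rev (bin X) ++ bout X)).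
Proof.
elim=> {X} [X HX|X Y _ IH [phi [hphi <- <-]]||||
            X Y f Q q hX IHX hY IHY hf hq|X Y Q q hX IHX hY IHY hk hq|X _ IH] /=.
- by apply: nc_gen; exists X, id; rewrite map_id.
- by have := nclosure_fib_gens_map_reduce (giso_inj_ghom hphi) IH; rewrite map_cat map_rev.
- exact: nc_one.
- exact: nc_one.
- exact: nc_one.
- have [iX iY] := union_inj_ghom hf hq.
  have NX := nclosure_fib_gens_map_reduce iX IHX.
  have := nclosure_fib_gens_map_reduce iY IHY.
  rewrite map_cat map_rev -!map_shift => NY.
  have hu : all (fun v => v < nv Q) (map q (shift (bgr X) (bin Y))).
    apply: all_map_lt (quot_lt hq) (shift_lt _ _).
    by move: (skew_gen_labels hY); rewrite all_cat => /andP [].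
  have := nc_mul (nc_conj NX hu) NY.
  by rewrite reduce_conj_mul !map_cat !map_rev rev_cat -!catA.
- have [hb hc] : all (fun v => v < nv (bgr X)) (bout X) /\
                 all (fun v => v < nv (bgr Y)) (bin Y).
    move: (skew_gen_labels hX) (skew_gen_labels hY).
    by rewrite !all_cat => /andP [_ ->] /andP [-> _].
  have [iX iY e] := comp_inj_ghom hk hb hc hq.
  have := nc_mul (nclosure_fib_gens_map_reduce iX IHX)
                 (nclosure_fib_gens_map_reduce iY IHY).
  by rewrite !map_cat !map_rev -!map_shift -e reduce_mul_cancel.
- by have := nc_inv IH; rewrite -reduce_rev rev_cat revK.
Qed.

Lemma fibration_nclosure K w : fibration S K w -> nclosure (nv K) (fib_gens S K) w.
Proof.
move=> [X [phi [hX hphi ->]]].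
exact: nclosure_fib_gens_map_reduce (giso_inj_ghom hphi) (skew_gen_nclosure hX).
Qed.

End SkewGenerated.

Definition glue_overlap (H : graph) (io : nat -> nat) : seq (nat * nat) :=
  [seq (io h, h) | h <- iota 0 (nv H)].

Definition glue_map (K : graph) (io : nat -> nat) (x : nat) : nat :=
  if x < nv K then x else io (x - nv K).

Section Glue.
Variables (H K : graph) (io : nat -> nat).
Hypothesis hio : inj_ghom H K io.

Lemma glue_vertex_overlap : vertex_overlap K H (glue_overlap H io).
Proof.
case: hio => h1 h2 _; split.
- rewrite /unzip1 -map_comp map_inj_in_uniq ?iota_uniq // => x y.
  by rewrite !mem_iota => hx hy; apply: h2; lia.
- by rewrite /unzip2 -map_comp map_id iota_uniq.
- by apply/allP => p /mapP [h]; rewrite mem_iota => hh -> /=; rewrite h1 //=; lia.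
Qed.

Lemma glue_is_quot :
  is_quot (dunion K H) (overlap_pairs K (glue_overlap H io)) K (glue_map K io).
Proof.
case: hio => h1 h2 h3; rewrite /glue_map; split.
- by move=> x /= hx; case: ifP => // hK; apply: h1; lia.
- by move=> y hy; exists y; rewrite ?hy //= ltn_addr.
- move=> p /mapP [p' /mapP [h]]; rewrite mem_iota => hh -> -> /=.
  by rewrite h1 ?ltnNge ?leq_addr /= ?addKn //; lia.
- move=> r hr x y /= hx hy.
  have r_glue z : nv K <= z -> z < nv K + nv H -> r (io (z - nv K)) = r z.
    move=> hz1 hz2; rewrite -{2}(subnKC hz1).
    apply: (hr (_, _)); apply/mapP; exists (io (z - nv K), z - nv K) => //.
    by apply/mapP; exists (z - nv K) => //; rewrite mem_iota; lia.
  case: ifP => hxK; case: ifP => hyK.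
  + by move=> ->.
  + by move=> ->; rewrite r_glue //; lia.
  + by move=> <-; rewrite r_glue //; lia.
  + move=> /h2 e; have exy : x - nv K = y - nv K by apply: e; lia.
    by congr r; lia.
- move=> x' y' hx hy; split.
    by move=> hxy; exists x', y'; rewrite /= ?hx ?hy ?ltn_addr.
  move=> [x [y [/= hx' hy' <- <-]]].
  by case: ifP => hxK; case: ifP => hyK // /h3; apply; lia.
Qed.

Lemma glue_map_cat a c : all (fun v => v < nv K) a ->
  map (glue_map K io) (a ++ shift K c) = a ++ map io c.
Proof.
move=> /allP ha; rewrite map_cat map_shift; congr (_ ++ _).
  by rewrite -[RHS]map_id; apply/eq_in_map => x /ha hx; rewrite /glue_map hx.
by apply: eq_map => x; rewrite /glue_map ltnNge leq_addr /= addKn.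
Qed.

Lemma skew_gen_glue S a b c d : all (fun v => v < nv K) (a ++ b) ->
  skew_gen S (BG K a b) -> skew_gen S (BG H c d) ->
  skew_gen S (BG K (a ++ map io c) (b ++ map io d)).
Proof.
rewrite all_cat => /andP [ha hb] hX hY.
by have := sg_union hX hY glue_vertex_overlap glue_is_quot; rewrite /= !glue_map_cat.
Qed.

End Glue.

Lemma fibrationP S K w : fibration S K w <->
  exists a b, skew_gen S (BG K a b) /\ w = reduce (rev a ++ b).
Proof.
split=> [[X [phi [hX hphi ->]]]|[a [b [hX ->]]]].
  exists (map phi (bin X)), (map phi (bout X)); rewrite map_cat map_rev; split=> //.
  by apply: sg_iso hX _; exists phi.
by exists (BG K a b), id; rewrite map_id.
Qed.

Section FibrationIsNormalSubgroup.
Variables (S : bgraph -> Prop) (K : graph).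
Hypothesis HS : forall X, S X -> wf_bgraph X.

Let labels_lt a b (hX : skew_gen S (BG K a b)) : all (fun v => v < nv K) (a ++ b) :=
  skew_gen_labels HS hX.

Lemma fibration_conj1 v w : v < nv K -> fibration S K w ->
  fibration S K (reduce (v :: w ++ [:: v])).
Proof.
move=> hv /fibrationP [a [b [hX ->]]]; apply/fibrationP.
have hio : inj_ghom M_graph K (fun=> v) by split=> // [] [|x] [|y].
have hM : skew_gen S (BG M_graph [:: 0] [:: 0]) by exact: sg_M11.
exists (a ++ [:: v]), (b ++ [:: v]); split.
  exact (skew_gen_glue hio (labels_lt hX) hX hM).
by rewrite -[v :: _]cat1s reduce_cat_reduce rev_cat -!catA.
Qed.

Lemma fibration_conj u w : all (fun v => v < nv K) u -> fibration S K w ->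
  fibration S K (reduce (rev u ++ w ++ u)).
Proof.
elim: u w => [|v u IH] w /=.
  rewrite cats0 => _ /fibrationP [a [b [hX ->]]].
  by rewrite reduce_idem; apply/fibrationP; exists a, b.
move=> /andP [hv hu] /(fibration_conj1 hv) /(IH _ hu).
by rewrite -cat1s reduce_cat_reduce rev_cons -cats1 -!catA.
Qed.

Lemma fibration_inv w : fibration S K w -> fibration S K (rev w).
Proof.
move=> /fibrationP [a [b [hX ->]]]; apply/fibrationP; exists b, a.
by split; [exact: sg_inv hX | rewrite -reduce_rev rev_cat revK].
Qed.

Lemma skew_gen_cat a b c d : skew_gen S (BG K a b) -> skew_gen S (BG K c d) ->
  skew_gen S (BG K (a ++ c) (b ++ d)).
Proof.
move=> hX hY.
by have := skew_gen_glue (giso_inj_ghom (giso_id K)) (labels_lt hX) hX hY; rewrite !map_id.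
Qed.

Lemma fibration_mul x y : fibration S K x -> fibration S K y ->
  fibration S K (reduce (x ++ y)).
Proof.
move=> hx /fibrationP [c [d [hY ->]]].
have hc : all (fun v => v < nv K) (rev c).
  by move: (labels_lt hY); rewrite all_cat all_rev => /andP [].
have /fibrationP [a' [b' [hX' e]]] := fibration_conj hc hx.
apply/fibrationP; exists (a' ++ c), (b' ++ d); split; first exact: skew_gen_cat.
rewrite rev_cat -catA (catA (rev a')) -reduce_cat_reduce -e revK.
by rewrite reduce_cat_reducer reduce_cat_reduce -!catA reduce_revK.
Qed.

Lemma fibration_gen x g : fibration S K x -> fib_gens S K g ->
  fibration S K (reduce g).
Proof.
move=> hx [[H c d] [io [HX hio ->]]] /=.
have hc : all (fun v => v < nv K) (map io c).
  case: (HS HX) => _; rewrite all_cat => /andP [hc _].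
  by case: hio => h1 _ _; apply: all_map_lt hc.
have hz : fibration S K (reduce (rev (map io c) ++ x ++ map io d)).
  move: hx => /fibrationP [a [b [hX ->]]]; apply/fibrationP.
  exists (a ++ map io c), (b ++ map io d); split.
    exact (skew_gen_glue hio (labels_lt hX) hX (sg_base HX)).
  by rewrite reduce_cat_reduce rev_cat -!catA.
have := fibration_mul (fibration_inv (fibration_conj hc hx)) hz.
rewrite -reduce_rev !rev_cat revK -catA reduce_reduce_cat -!catA (catA (rev _) (rev x)).
by rewrite reduce_cat_Krev -catA reduce_cat_revK map_cat map_rev.
Qed.

Lemma fibration_nil x : fibration S K x -> fibration S K [::].
Proof.
move=> hx; have := fibration_mul (fibration_inv hx) hx.
by rewrite -[rev x ++ x]cats0 -catA reduce_revK.
Qed.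

Lemma nclosure_fibration x w : fibration S K x ->
  nclosure (nv K) (fib_gens S K) w -> fibration S K w.
Proof.
move=> hx; elim=> {w} [g /(fibration_gen hx) //| |y z _ hy _ hz|y _ hy|y u _ hy hu].
- exact: fibration_nil hx.
- exact: fibration_mul.
- exact: fibration_inv.
- exact: fibration_conj.
Qed.

End FibrationIsNormalSubgroup.

Lemma fu_closure_skew_gen S K : fu_closure S K -> exists a b, skew_gen S (BG K a b).
Proof.
elim=> {K} [G hG|G hG hG00|[G a b] hX|G H phi _ [a [b hX]] hphi|
            K H f Q q _ [a [b hX]] _ [c [d hY]] hf hq].
- exists [::], [::]; apply: sg_iso (sg_zero S) _.
  by exists id; split=> //; split=> //= x; rewrite ltn0.
- exists [:: 0], [:: 0]; apply: sg_iso (sg_M11 S) _.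
  exists id; split=> //; split=> //=; rewrite ?hG //.
  by move=> [|x] [|y] //= _ _; rewrite hG00.
- by exists a, b; apply: sg_base.
- by exists (map phi a), (map phi b); apply: sg_iso hX _; exists phi.
- by do 2 eexists; apply: sg_union hX hY hf hq.
Qed.

Theorem proposition2p29 (S : bgraph -> Prop)
  (HS : forall X, S X -> wf_bgraph X) :
  (forall K, fu_closure S K -> exists w, fibration S K w) /\
  (forall K, wf_graph K -> (exists w, fibration S K w) ->
     forall w, fibration S K w <-> nclosure (nv K) (fib_gens S K) w).
Proof.
split=> [K /fu_closure_skew_gen [a [b hX]] | K _ [x hx] w].
  by exists (reduce (rev a ++ b)); apply/fibrationP; exists a, b.
split; first exact: fibration_nclosure.
exact: nclosure_fibration hx.
Qed.
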